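(* Consider the system $\mathbf{x}_{k+1}=f_k(\mathbf{x}_k,\mathbf{w}_k)$, $\mathbf{y}_k=g_k(\mathbf{x}_k,\mathbf{v}_k)$, $k\in\mathbb{N}_0$, of uncertain variables on a common sample space $\Omega$ (no relation assumption is imposed on $\mathbf{x}_0,\mathbf{w}_{0:k},\mathbf{v}_{0:k}$). Then: (i) (Prediction) for every $k\in\mathbb{Z}_+$ and every $y_{0:k-1}\in\llbracket\mathbf{y}_{0:k-1}\rrbracket$, \[ \llbracket\mathbf{x}_k\,|\,y_{0:k-1}\rrbracket=\bigcup_{x_{k-1}\in\llbracket\mathbf{x}_{k-1}|y_{0:k-1}\rrbracket} f_{k-1}\big(x_{k-1},\llbracket\mathbf{w}_{k-1}\,|\,x_{k-1},y_{0:k-1}\rrbracket\big); \] (ii) (Update) for every $k\in\mathbb{N}_0$ and every $y_{0:k}\in\llbracket\mathbf{y}_{0:k}\rrbracket$, \[ \llbracket\mathbf{x}_k\,|\,y_{0:k}\rrbracket=\Big\{x_k\in\llbracket\mathbf{x}_k\,|\,y_{0:k-1}\rrbracket:\ g_k\big(x_k,\llbracket\mathbf{v}_k\,|\,x_k,y_{0:k-1}\rrbracket\big)\cap\{y_k\}\neq\emptyset\Big\}, \] with the conventions $\llbracket\mathbf{x}_0\,|\,y_{0:-1}\rrbracket:=\llbracket\mathbf{x}_0\rrbracket$ and $\llbracket\mathbf{v}_0\,|\,x_0,y_{0:-1}\rrbracket:=\llbracket\mathbf{v}_0\,|\,x_0\rrbracket$; (iii) (Optimality) the estimator $X_k^*(y_{0:k}):=\llbracket\mathbf{x}_k\,|\,y_{0:k}\rrbracket$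 is the optimal SMF: it contains every possible $x_k$ given $y_{0:k}$, and $X_k^*(y_{0:k})\subseteq X_k'(y_{0:k})$ for every SMF $X_k'$ and every $y_{0:k}$.
   Context: Uncertain variables: fix a nonempty set $\Omega$. An uncertain variable is a (measurable) function $\mathbf{x}\colon\Omega\to\mathcal{X}$; a realization is $x=\mathbf{x}(\omega)$. Tuples such as $\mathbf{y}_{0:k}:=(\mathbf{y}_0,\dots,\mathbf{y}_k)$ are regarded as uncertain variables $\omega\mapsto(\mathbf{y}_0(\omega),\dots,\mathbf{y}_k(\omega))$, with realizations $y_{0:k}=(y_0,\dots,y_k)$. Range: $\llbracket\mathbf{x}\rrbracket:=\{\mathbf{x}(\omega):\omega\in\Omega\}$. Conditional range: $\llbracket\mathbf{x}\,|\,y\rrbracket:=\{\mathbf{x}(\omega):\omega\in\Omega,\ \mathbf{y}(\omega)=y\}$; conditioning on several values means conditioning on the tuple, e.g. $\llbracket\mathbf{w}\,|\,x,y_{0:k-1}\rrbracket=\{\mathbf{w}(\omega):\mathbf{x}(\omega)=x,\ \mathbf{y}_{0:k-1}(\omega)=y_{0:k-1}\}$. System: $\mathbf{x}_k$ takes values in $\llbracket\mathbf{x}_k\rrbracket\subseteq\mathbb{R}^n$, process noise $\mathbf{w}_k$ in $\llbracket\mathbf{w}_k\rrbracket\subseteq\mathbb{R}^p$, measurement $\mathbf{y}_k$ in $\llbracket\mathbf{y}_k\rrbracket\subseteq\mathbb{R}^m$, measurement noise $\mathbf{v}_k$ in $\llbracket\mathbf{v}_k\rrbracket\subseteq\mathbb{R}^q$;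 $f_k\colon\llbracket\mathbf{x}_k\rrbracket\times\llbracket\mathbf{w}_k\rrbracket\to\llbracket\mathbf{x}_{k+1}\rrbracket$ and $g_k\colon\llbracket\mathbf{x}_k\rrbracket\times\llbracket\mathbf{v}_k\rrbracket\to\llbracket\mathbf{y}_k\rrbracket$ are maps, and $\mathbf{x}_{k+1}(\omega)=f_k(\mathbf{x}_k(\omega),\mathbf{w}_k(\omega))$, $\mathbf{y}_k(\omega)=g_k(\mathbf{x}_k(\omega),\mathbf{v}_k(\omega))$ for all $\omega$. For a map $h$ and set $S$, $h(x,S):=\{h(x,s):s\in S\}$. Set-Membership Filter (SMF): a family of set-valued maps $X_k$, $k\in\mathbb{N}_0$, such that $X_k(y_{0:k})$ contains every possible state given the measurements, i.e. $\{\mathbf{x}_k(\omega):\mathbf{y}_{0:k}(\omega)=y_{0:k}\}\subseteq X_k(y_{0:k})$; an SMF $X^*$ is optimal if $X_k^*(y_{0:k})\subseteq X_k'(y_{0:k})$ for every SMF $X'$, every $k$ and every $y_{0:k}$. *)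

From HB Require Import structures.
From mathcomp Require Import all_boot all_order all_algebra.
From mathcomp Require Import classical_sets reals.
Set Implicit Arguments. Unset Strict Implicit. Unset Printing Implicit Defensive.
Local Open Scope classical_set_scope.

Definition urange (Omega T : Type) (x : Omega -> T) : set T :=
  [set x w | w in [set: Omega]].

Definition cond_range (Omega T Z : Type) (x : Omega -> T) (z : Omega -> Z)
  (zv : Z) : set T :=
  [set x w | w in [set w | z w = zv]].

(* The tuple y_{0:k-1} = (y_0, ..., y_{k-1}) as an uncertain variable
   (for k = 0 it is the empty tuple, which realizes the paper's
   conventions [[ . | y_{0:-1} ]] := [[ . ]]). *)
Definition ypast (Omega Y : Type) (y : nat -> Omega -> Y) (k : nat)
  (w : Omega) : {ffun 'I_k -> Y} :=
  [ffun i : 'I_k => y (nat_of_ord i) w].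

Definition finit (Y : Type) (k : nat) (ys : {ffun 'I_k.+1 -> Y}) :
  {ffun 'I_k -> Y} :=
  [ffun i : 'I_k => ys (widen_ord (leqnSn k) i)].

Definition is_SMF (Omega X Y : Type) (x : nat -> Omega -> X)
  (y : nat -> Omega -> Y) (Xs : forall k, {ffun 'I_k.+1 -> Y} -> set X) :=
  forall k (ys : {ffun 'I_k.+1 -> Y}),
    [set x k w | w in [set w | ypast y k.+1 w = ys]] `<=` Xs k ys.

Definition is_optimal_SMF (Omega X Y : Type) (x : nat -> Omega -> X)
  (y : nat -> Omega -> Y) (Xs : forall k, {ffun 'I_k.+1 -> Y} -> set X) :=
  is_SMF x y Xs /\
  forall Xs' : forall k, {ffun 'I_k.+1 -> Y} -> set X,
    is_SMF x y Xs' -> forall k ys, Xs k ys `<=` Xs' k ys.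

From HB Require Import structures.
From mathcomp Require Import all_boot all_order all_algebra.
From mathcomp Require Import classical_sets reals.
Local Open Scope classical_set_scope.

(* The three claims are instances of set-theoretic facts about conditional
   ranges on an arbitrary sample space Omega; no structure of R^n and none of
   the range hypotheses of the theorem are needed.
   - Prediction: if x' = f(x, w) pointwise, the range of x' given z = zv is
     the union, over the possible values a of x given zv, of the images
     f(a, .) of the range of w given (x, z) = (a, zv).
   - Update: if conditioning on z' = zv' amounts to conditioning on z = zv
     together with an extra observation y = yv, and y = g(x, v) pointwise,
     then the range of x given zv' is cut out of the range of x given zv by
     the consistency test "g(a, range of v given (a, zv)) meets {yv}".
   - Optimality: the conditional range is by definition the smallest set an
     SMF may return, hence it is the optimal SMF.
   The only fact specific to measurements is that observing y_{0:k} is the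
   same as observing y_{0:k-1} and then y_k (lemma ypast_succ). *)

Section ConditionalRanges.

Context {Omega X W Y V Z Z' : Type}.

Lemma cond_range_propagate (x x' : Omega -> X) (w : Omega -> W)
    (f : X -> W -> X) (z : Omega -> Z) (zv : Z) :
  (forall om, x' om = f (x om) (w om)) ->
  cond_range x' z zv =
  \bigcup_(a in cond_range x z zv)
     (f a @` cond_range w (fun om => (x om, z om)) (a, zv)).
Proof.
move=> hx; apply/seteqP; split.
- move=> _ [om /= zom <-]; exists (x om); first by exists om.
  by rewrite hx; exists (w om) => //; exists om => //=; rewrite zom.
- move=> _ [a _ [_ [om /= [<- zom] <-] <-]].
  by exists om => //; rewrite hx.
Qed.

Lemma cond_range_observe {x : Omega -> X} {v : Omega -> V} {y : Omega -> Y}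
    {g : X -> V -> Y} {z : Omega -> Z} {z' : Omega -> Z'} {zv : Z} {zv' : Z'}
    {yv : Y} :
  (forall om, y om = g (x om) (v om)) ->
  (forall om, z' om = zv' <-> z om = zv /\ y om = yv) ->
  cond_range x z' zv' =
  [set a | cond_range x z zv a /\
     (g a @` cond_range v (fun om => (x om, z om)) (a, zv))
       `&` [set yv] !=set0].
Proof.
move=> hy hz'; apply/seteqP; split.
- move=> _ [om /= /hz' [zom yom] <-]; split; first by exists om.
  exists (y om); split => //=.
  by rewrite hy; exists (v om) => //; exists om => //=; rewrite zom.
- move=> a [_ [_ [[_ [om /= [xom zom] <-] <-] /= gyv]]].
  by exists om => //; apply/hz'; rewrite hy xom.
Qed.

End ConditionalRanges.

Lemma ypast_succ {Omega Y : Type} (y : nat -> Omega -> Y) (k : nat)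
    (om : Omega) (ys : {ffun 'I_k.+1 -> Y}) :
  ypast y k.+1 om = ys <-> ypast y k om = finit ys /\ y k om = ys ord_max.
Proof.
split.
- move=> <-; split; last by rewrite /ypast ffunE.
  by apply/ffunP => i; rewrite /finit !ffunE.
- move=> [past_eq last_eq]; apply/ffunP => i; rewrite /ypast ffunE.
  have [lt_ik | ge_ik] := ltnP i k.
  + have := congr1 (fun F : {ffun 'I_k -> Y} => F (Ordinal lt_ik)) past_eq.
    by rewrite /ypast /finit !ffunE /= => ->; congr (ys _); exact: val_inj.
  + have -> : i = ord_max.
      by apply: val_inj; apply/eqP; rewrite eqn_leq -ltnS ltn_ord ge_ik.
    by rewrite last_eq.
Qed.

Lemma cond_range_optimal_SMF (Omega X Y : Type) (x : nat -> Omega -> X)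
    (y : nat -> Omega -> Y) :
  is_optimal_SMF x y (fun k ys => cond_range (x k) (ypast y k.+1) ys).
Proof. by split=> [k ys | Xs' smf' k ys]; last exact: smf'. Qed.

Theorem theorem1 (R : realType) (Omega : Type) (hOmega : inhabited Omega)
  (n p m q : nat)
  (x : nat -> Omega -> 'rV[R]_n) (w : nat -> Omega -> 'rV[R]_p)
  (y : nat -> Omega -> 'rV[R]_m) (v : nat -> Omega -> 'rV[R]_q)
  (f : nat -> 'rV[R]_n -> 'rV[R]_p -> 'rV[R]_n)
  (g : nat -> 'rV[R]_n -> 'rV[R]_q -> 'rV[R]_m)
  (hf : forall k xk wk, urange (x k) xk -> urange (w k) wk ->
          urange (x k.+1) (f k xk wk))
  (hg : forall k xk vk, urange (x k) xk -> urange (v k) vk ->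
          urange (y k) (g k xk vk))
  (hx : forall k om, x k.+1 om = f k (x k om) (w k om))
  (hy : forall k om, y k om = g k (x k om) (v k om)) :
  (* (i) prediction, stated for k+1 with k in N_0 *)
  (forall k (ys : {ffun 'I_k.+1 -> 'rV[R]_m}),
     urange (ypast y k.+1) ys ->
     cond_range (x k.+1) (ypast y k.+1) ys =
     \bigcup_(xk in cond_range (x k) (ypast y k.+1) ys)
        (f k xk @` cond_range (w k) (fun om => (x k om, ypast y k.+1 om))
                                    (xk, ys))) /\
  (* (ii) update *)
  (forall k (ys : {ffun 'I_k.+1 -> 'rV[R]_m}),
     urange (ypast y k.+1) ys ->
     cond_range (x k) (ypast y k.+1) ys =
     [set xk | cond_range (x k) (ypast y k) (finit ys) xk /\
        (g k xk @` cond_range (v k) (fun om => (x k om, ypast y k om))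
                                    (xk, finit ys))
          `&` [set ys ord_max] !=set0]) /\
  (* (iii) optimality *)
  is_optimal_SMF x y (fun k ys => cond_range (x k) (ypast y k.+1) ys).
Proof.
split; [|split].
- by move=> k ys _; apply: cond_range_propagate.
- move=> k ys _.
  exact: (cond_range_observe (hy k) (fun om => ypast_succ y k om ys)).
- exact: cond_range_optimal_SMF.
Qed.
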